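(* Let $A$ be an integral domain with field of fractions $F$. The following are equivalent: (1) $\Gamma(A)$ is path-connected. (2) For every Bézout point $x\in\mathbb{P}^1(F)$ there exist $a_0,\ldots,a_n\in A$ with $x=\infty\cdot S(a_n)S(a_{n-1})\cdots S(a_0)$. (3) Every Bézout pair satisfies a weak Euclidean algorithm. (4) $A$ is a $\mathrm{GE}_2$-ring. (5) Every Bézout point in $\mathbb{P}^1(F)$ admits a finite continued fraction expansion $a_0+\cfrac{1}{a_1+\cfrac{1}{\ddots+\cfrac{1}{a_n}}}$ with entries $a_i\in A$.
   Context: A unimodular row over $A$ is $(a,b)\in A^2$ with $aA+bA=A$. $\Gamma(A)$ is the graph whose vertices are classes of unimodular rows modulo multiplication by units, with $\{[u],[v]\}$ an edge iff the matrix with rows $u,v$ lies in $\mathrm{GL}_2(A)$. A Bézout pair is $(a,b)\in A^2\setminus\{(0,0)\}$ such that the ideal $\langle a,b\rangle$ is principal; a Bézout point is an element $a/b\in\mathbb{P}^1(F)=F\cup\{\infty\}$ with $(a,b)$ a Bézout pair. $\mathrm{GL}_2(A)$ acts on $\mathbb{P}^1(F)$ on the right by $q\cdot\begin{pmatrix}a&b\\c&d\end{pmatrix}=\frac{aq+c}{bq+d}$. $S(a)=\begin{pmatrix}a&1\\1&0\end{pmatrix}$. A pair $(a,b)$ satisfies a weak Euclidean algorithm if there exist $a_0,\ldots,a_n,r_0,\ldots,r_{n-1}\in A$ such that with $r_{-2}=a,r_{-1}=b,r_n=0$ one has $r_{k-2}=a_kr_{k-1}+r_k$ for $0\le k\le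 n$. $A$ is a $\mathrm{GE}_2$-ring if $\mathrm{GL}_2(A)$ is generated by elementary matrices and invertible diagonal matrices. *)

From HB Require Import structures.
From mathcomp Require Import all_boot all_order all_algebra.
Set Implicit Arguments. Unset Strict Implicit. Unset Printing Implicit Defensive.
Import Order.TTheory GRing.Theory Num.Theory.
Local Open Scope ring_scope.

Section Defs.
Variable A : idomainType.

Local Notation F := {fraction A}.
Definition frac_of (a : A) : F := @FracField.tofrac A a.

(* P^1(F) = F ∪ {∞}; None = ∞ *)
Definition P1 := option F.
Definition infty : P1 := None.

(* the point with homogeneous coordinates (x : y), for (x,y) <> (0,0) *)
Definition p1_of (x y : F) : P1 := if y == 0 then None else Some (x / y).

Definition p1_coords (q : P1) : F * F :=
  match q with Some z => (z, 1) | None => (1, 0) end.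

Definition mx2 (a b c d : A) : 'M[A]_2 :=
  \matrix_(i < 2, j < 2)
    if i == ord0 then (if j == ord0 then a else b) else (if j == ord0 then c else d).

Definition unimodular (u : A * A) : Prop :=
  exists x y : A, u.1 * x + u.2 * y = 1.

(* same vertex of Gamma(A): equal up to multiplication by a unit *)
Definition same_class (u v : A * A) : Prop :=
  exists c : A, c \is a GRing.unit /\ v = (c * u.1, c * u.2).

(* edge of Gamma(A) (independent of representatives) *)
Definition gamma_edge (u v : A * A) : Prop :=
  mx2 u.1 u.2 v.1 v.2 \in unitmx.

(* a path in Gamma(A) given by representatives w_0, ..., w_k *)
Fixpoint gamma_walk (w0 : A * A) (s : seq (A * A)) : Prop :=
  match s with
  | [::] => True
  | w1 :: s' => gamma_edge w0 w1 /\ gamma_walk w1 s'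
  end.

Definition Gamma_path_connected : Prop :=
  forall u v : A * A, unimodular u -> unimodular v ->
    exists (w0 : A * A) (s : seq (A * A)),
      unimodular w0 /\ (forall w, w \in s -> unimodular w) /\
      same_class u w0 /\ same_class v (last w0 s) /\ gamma_walk w0 s.

(* Bezout pairs: (a,b) <> (0,0) with <a,b> principal *)
Definition bezout_pair (a b : A) : Prop :=
  (a, b) <> (0, 0) /\
  exists d : A, forall z : A,
    (exists x y : A, z = a * x + b * y) <-> (exists w : A, z = d * w).

Definition frac_pt (a b : A) : P1 := p1_of (frac_of a) (frac_of b).

Definition bezout_point (x : P1) : Prop :=
  exists a b : A, bezout_pair a b /\ x = frac_pt a b.

(* right action of GL_2(A) on P^1(F):
   q . [[a,b],[c,d]] = (a q + c) / (b q + d) *)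
Definition p1_act (q : P1) (M : 'M[A]_2) : P1 :=
  let: (x, y) := p1_coords q in
  p1_of (frac_of (M ord0 ord0) * x + frac_of (M ord_max ord0) * y)
        (frac_of (M ord0 ord_max) * x + frac_of (M ord_max ord_max) * y).

Definition Smx (a : A) : 'M[A]_2 := mx2 a 1 1 0.

(* weak Euclidean algorithm; r k stands for r_{k-2} of the paper and q k for a_k *)
Definition weak_euclid (a b : A) : Prop :=
  exists (n : nat) (q r : nat -> A),
    r 0%N = a /\ r 1%N = b /\ r n.+2 = 0 /\
    forall k : nat, (k <= n)%N -> r k = q k * r k.+1 + r k.+2.

Definition elementary_mx (M : 'M[A]_2) : Prop :=
  exists x : A, M = mx2 1 x 0 1 \/ M = mx2 1 0 x 1.

Definition inv_diag_mx (M : 'M[A]_2) : Prop :=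
  exists u v : A, u \is a GRing.unit /\ v \is a GRing.unit /\ M = mx2 u 0 0 v.

Definition GE2_gen (M : 'M[A]_2) : Prop := elementary_mx M \/ inv_diag_mx M.

Definition GE2_ring : Prop :=
  forall M : 'M[A]_2, M \in unitmx ->
    exists s : seq 'M[A]_2,
      (forall g, g \in s -> GE2_gen g \/ GE2_gen (invmx g)) /\
      M = \prod_(g <- s) g.

(* P^1 arithmetic for continued fractions: 1/0 = ∞, 1/∞ = 0, a + ∞ = ∞ *)
Definition p1_inv (z : P1) : P1 :=
  match z with None => Some 0 | Some y => p1_of 1 y end.
Definition p1_addA (a : A) (z : P1) : P1 :=
  match z with None => None | Some y => Some (frac_of a + y) end.

(* cfrac a0 [:: a1; ...; an] = a0 + 1/(a1 + 1/( ... + 1/an)) *)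
Fixpoint cfrac (a0 : A) (s : seq A) : P1 :=
  match s with
  | [::] => Some (frac_of a0)
  | a1 :: s' => p1_addA a0 (p1_inv (cfrac a1 s'))
  end.

Definition cond2 : Prop :=
  forall x : P1, bezout_point x ->
    exists (n : nat) (a : nat -> A),
      x = p1_act infty (\prod_(i < n.+1) Smx (a (n - i)%N)).

Definition cond3 : Prop :=
  forall a b : A, bezout_pair a b -> weak_euclid a b.

Definition cond5 : Prop :=
  forall x : P1, bezout_point x ->
    exists (a0 : A) (s : seq A), x = cfrac a0 s.

End Defs.

(* Everything is organised by the words W = S(a_1) ... S(a_n). Right multiplication by
   S(c) sends a row (x, y) to (x c + y, x), a step of the Euclidean algorithm read
   backwards, so (a, b) satisfies a weak Euclidean algorithm iff it is a multiple of the
   first row of some W. The point oo.W and the continued fraction [a_n; ..., a_1] are the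
   point of P^1(F) defined by that row, and a pair defining the same point as a unimodular
   row is a multiple of it; this gives (2) <-> (3) <-> (5).
   An invertible matrix whose first row is c times the first row of an invertible P equals
   [[c, 0], [e, f]] P, and [[c, 0], [e, f]] = diag(c, f) S(0) S(e/f). Under (3) every
   invertible matrix is therefore diag(u, v) W. Such matrices are products of elementary
   and diagonal ones, and they are stable under left multiplication by these generators
   (S(c) diag(u, v) = diag(v, u) S(c u / v)), so (4) holds iff all invertible matrices have
   this form. Applied to the matrix with rows u, v of an edge of Gamma(A), the same
   factorisation shows that "multiple of the first row of a word" passes from u to v; it
   holds for (1, 0), hence (1) -> (3). Conversely the first rows of the suffixes of W Q form
   a path in Gamma(A), and writing M_u M_v^-1 = diag(p, q) W for invertible M_u, M_v with
   first rows u, v joins u to v. *)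

From mathcomp Require Import all_boot all_order all_algebra.
From mathcomp Require Import ring.
From Pilot Require Import Defs.
Set Implicit Arguments. Unset Strict Implicit. Unset Printing Implicit Defensive.
Import GRing.Theory.
Local Open Scope ring_scope.

Section GE2.
Variable A : idomainType.
Local Notation mx2 := (@mx2 A).
Local Notation Smx := (@Smx A).

(** * Two-by-two matrices and unimodular rows *)

Lemma mx2_00 a b c d : mx2 a b c d ord0 ord0 = a. Proof. by rewrite mxE. Qed.
Lemma mx2_01 a b c d : mx2 a b c d ord0 ord_max = b. Proof. by rewrite mxE. Qed.
Lemma mx2_10 a b c d : mx2 a b c d ord_max ord0 = c. Proof. by rewrite mxE. Qed.
Lemma mx2_11 a b c d : mx2 a b c d ord_max ord_max = d. Proof. by rewrite mxE. Qed.
Definition mx2E := (mx2_00, mx2_01, mx2_10, mx2_11).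

Lemma mx2_eta (M : 'M[A]_2) :
  M = mx2 (M ord0 ord0) (M ord0 ord_max) (M ord_max ord0) (M ord_max ord_max).
Proof.
apply/matrixP => i j; rewrite !mxE.
by case: i => [[|[|i]] Hi]; case: j => [[|[|j]] Hj] //=; congr (M _ _); exact: val_inj.
Qed.

Lemma mulmx2E (M N : 'M[A]_2) i j :
  (M *m N) i j = M i ord0 * N ord0 j + M i ord_max * N ord_max j.
Proof.
rewrite !mxE !big_ord_recl big_ord0 addr0.
by congr (_ + M _ _ * N _ _); exact: val_inj.
Qed.

Lemma mx2_mul a b c d a' b' c' d' :
  mx2 a b c d *m mx2 a' b' c' d' =
  mx2 (a * a' + b * c') (a * b' + b * d') (c * a' + d * c') (c * b' + d * d').
Proof. by rewrite [LHS]mx2_eta !mulmx2E !mx2E. Qed.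

Lemma mx2_1 : 1%:M = mx2 1 0 0 1.
Proof. by rewrite [LHS]mx2_eta !mxE. Qed.

Lemma det_mx2 a b c d : \det (mx2 a b c d) = a * d - b * c.
Proof.
rewrite (expand_det_row _ ord0) !big_ord_recl big_ord0 /cofactor !det_mx11 !mxE /=.
by rewrite !expr0 !expr1 addr0 mul1r mulN1r mulrN.
Qed.

Lemma unitmx2 a b c d : (mx2 a b c d \in unitmx) = (a * d - b * c \is a GRing.unit).
Proof. by rewrite unitmxE det_mx2. Qed.

Lemma invmx_right (M N : 'M[A]_2) : M *m N = 1%:M -> invmx M = N.
Proof.
move=> MN; have [Mu _] := mulmx1_unit MN.
by rewrite -[invmx M]mulmx1 -MN mulKmx.
Qed.

Definition row0 (M : 'M[A]_2) : A * A := (M ord0 ord0, M ord0 ord_max).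

Lemma unimodular_row0 M : M \in unitmx -> unimodular (row0 M).
Proof.
move=> Mu; exists (invmx M ord0 ord0), (invmx M ord_max ord0).
by rewrite /= -mulmx2E mulmxV // mx2_1 mx2E.
Qed.

Lemma unimodular_neq0 (u : A * A) : unimodular u -> u <> (0, 0).
Proof.
case=> x [y xy1] u0; move: xy1; rewrite u0 /= !mul0r addr0 => /eqP.
by rewrite eq_sym oner_eq0.
Qed.

Lemma unimodular_completion u : unimodular u -> exists2 M, M \in unitmx & row0 M = u.
Proof.
case: u => a b [x [y /= axby]]; exists (mx2 a b (- y) x); last by rewrite /row0 !mx2E.
by rewrite unitmx2 mulrN opprK axby unitr1.
Qed.

Lemma unimodular_multiple (a b x y : A) :
  unimodular (x, y) -> a * y = b * x -> exists c, a = c * x /\ b = c * y.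
Proof.
case=> s [t /= xsyt] ay_bx; exists (a * s + b * t).
have Ea : a * (x * s + y * t) = (a * s + b * t) * x.
  by rewrite mulrDr mulrA [a * (y * t)]mulrA ay_bx; ring.
have Eb : b * (x * s + y * t) = (a * s + b * t) * y.
  by rewrite mulrDr mulrA -ay_bx; ring.
by rewrite -Ea -Eb xsyt !mulr1.
Qed.

Lemma unimodular_bezout_pair (a b : A) : unimodular (a, b) -> bezout_pair a b.
Proof.
move=> ab_unimod; split; first exact: unimodular_neq0.
case: ab_unimod => x [y /= axby]; exists 1 => z; split=> _; first by exists z; rewrite mul1r.
by exists (x * z), (y * z); rewrite !mulrA -mulrDl axby mul1r.
Qed.

Lemma bezout_pair_unimodular (a b : A) : bezout_pair a b ->
  exists d a' b', [/\ a = d * a', b = d * b' & unimodular (a', b')].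
Proof.
move=> [ab0 [d ideal_d]].
have [a' ea] : exists a', a = d * a' by apply/(ideal_d a).1; exists 1, 0; rewrite mulr1 mulr0 addr0.
have [b' eb] : exists b', b = d * b' by apply/(ideal_d b).1; exists 0, 1; rewrite mulr1 mulr0 add0r.
have [x [y ed]] : exists x y, d = a * x + b * y by apply/(ideal_d d).2; exists 1; rewrite mulr1.
have d0 : d != 0 by apply: contra_not_neq ab0 => d0; rewrite ea eb d0 !mul0r.
exists d, a', b'; split=> //; exists x, y; apply: (mulfI d0).
by rewrite mulrDr !mulrA -ea -eb -ed mulr1.
Qed.

Lemma unitmx_row0_factor (M P : 'M[A]_2) c :
  M \in unitmx -> P \in unitmx ->
  M ord0 ord0 = c * P ord0 ord0 -> M ord0 ord_max = c * P ord0 ord_max ->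
  exists e f, [/\ c \is a GRing.unit, f \is a GRing.unit & M = mx2 c 0 e f *m P].
Proof.
move=> Mu Pu M00 M01; set N := M *m invmx P.
have PPi j : c * P ord0 ord0 * invmx P ord0 j + c * P ord0 ord_max * invmx P ord_max j
             = c * (mx2 1 0 0 1) ord0 j.
  by rewrite -mx2_1 -(mulmxV Pu) mulmx2E; ring.
have N00 : N ord0 ord0 = c by rewrite mulmx2E M00 M01 PPi mx2E mulr1.
have N01 : N ord0 ord_max = 0 by rewrite mulmx2E M00 M01 PPi mx2E mulr0.
have : N \in unitmx by rewrite unitmx_mul Mu unitmx_inv.
rewrite [N]mx2_eta N00 N01 unitmx2 mul0r subr0 unitrM => /andP[cu fu].
exists (N ord_max ord0), (N ord_max ord_max); split=> //.
by rewrite -N00 -N01 -mx2_eta mulmxKV.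
Qed.

Lemma row0_diag_mul u v P :
  row0 (mx2 u 0 0 v *m P) = (u * P ord0 ord0, u * P ord0 ord_max).
Proof. by rewrite /row0 !mulmx2E !mx2E !mul0r !addr0. Qed.

(** * Words in the matrices S(c) *)

Definition Sprod (l : seq A) : 'M[A]_2 := \prod_(c <- l) Smx c.

Lemma Sprod_nil : Sprod [::] = 1%:M.
Proof. by rewrite /Sprod big_nil. Qed.

Lemma Sprod_cons c l : Sprod (c :: l) = Smx c *m Sprod l.
Proof. by rewrite /Sprod big_cons mulmxE. Qed.

Lemma Sprod_rcons l c : Sprod (rcons l c) = Sprod l *m Smx c.
Proof. by rewrite /Sprod -cats1 big_cat big_seq1 mulmxE. Qed.

Lemma Sprod_unit l : Sprod l \in unitmx.
Proof.
elim: l => [|c l IH]; first by rewrite Sprod_nil unitmx1.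
by rewrite Sprod_cons unitmx_mul IH unitmx2 mulr0 mul1r sub0r unitrN unitr1.
Qed.

Lemma Sprod_pad l : Sprod (l ++ [:: 0; 0]) = Sprod l.
Proof.
rewrite -cat_rcons cats1 !Sprod_rcons -mulmxA /Defs.Smx mx2_mul.
by rewrite !(mulr0, mul0r, mulr1, addr0, add0r) -mx2_1 mulmx1.
Qed.

Lemma row0_Sprod_rcons l c :
  row0 (Sprod (rcons l c)) = (Sprod l ord0 ord0 * c + Sprod l ord0 ord_max, Sprod l ord0 ord0).
Proof. by rewrite /row0 Sprod_rcons !mulmx2E !mx2E !mulr1 !mulr0 !addr0. Qed.

Lemma row0_Smx_mul c P : row0 (Smx c *m P) =
  (c * P ord0 ord0 + P ord_max ord0, c * P ord0 ord_max + P ord_max ord_max).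
Proof. by rewrite /row0 !mulmx2E !mx2E !mul1r. Qed.

Lemma Smx_mul_diag c u v : v \is a GRing.unit ->
  Smx c *m mx2 u 0 0 v = mx2 v 0 0 u *m Smx (c * u / v).
Proof.
move=> vu; have e : v * (c * u / v) = c * u by rewrite mulrC divrK.
by rewrite /Defs.Smx !mx2_mul e; congr Defs.mx2; ring.
Qed.

Lemma upper_mx2_Smx x : mx2 1 x 0 1 = Smx x *m Smx 0.
Proof. by rewrite /Defs.Smx mx2_mul; congr Defs.mx2; ring. Qed.

Lemma lower_mx2_Smx x : mx2 1 0 x 1 = Smx 0 *m Smx x.
Proof. by rewrite /Defs.Smx mx2_mul; congr Defs.mx2; ring. Qed.

Lemma lower_mx2_diag_Smx c e f : f \is a GRing.unit ->
  mx2 c 0 e f = mx2 c 0 0 f *m Smx 0 *m Smx (e / f).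
Proof.
move=> fu; have fef : f * (e / f) = e by rewrite mulrC divrK.
by rewrite -mulmxA -lower_mx2_Smx mx2_mul fef; congr Defs.mx2; ring.
Qed.

(** * Weak Euclidean algorithms *)

(* (x, y) S(q) = (x q + y, x) is a step of the Euclidean algorithm read backwards. *)
Definition Sprod_row_multiple (a b : A) : Prop :=
  exists c l, a = c * Sprod l ord0 ord0 /\ b = c * Sprod l ord0 ord_max.

Lemma Sprod_row_multiple0 b : Sprod_row_multiple b 0.
Proof. by exists b, [::]; rewrite Sprod_nil mx2_1 !mx2E mulr1 mulr0. Qed.

Lemma Sprod_row_multiple_step q b r :
  Sprod_row_multiple b r -> Sprod_row_multiple (q * b + r) b.
Proof.
move=> [c [l [-> ->]]]; exists c, (rcons l q).
by case: (row0_Sprod_rcons l q) => -> ->; split; last by []; ring.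
Qed.

Lemma Sprod_row_multipleZ k a b :
  Sprod_row_multiple a b -> Sprod_row_multiple (k * a) (k * b).
Proof. by move=> [c [l [-> ->]]]; exists (k * c), l; rewrite !mulrA. Qed.

Lemma weak_euclid_base (q b : A) : weak_euclid (q * b) b.
Proof.
exists 0%N, (fun=> q), (fun k => if k is k'.+1 then (if k' is 0%N then b else 0) else q * b).
by do 3!split=> //; case=> // _; rewrite addr0.
Qed.

Lemma weak_euclid_step (q b r : A) : weak_euclid b r -> weak_euclid (q * b + r) b.
Proof.
move=> [n [qs [rs [rs0 [rs1 [rsn Hrs]]]]]].
exists n.+1, (fun k => if k is k'.+1 then qs k' else q),
  (fun k => if k is k'.+1 then rs k' else q * b + r).
by do 3!split=> //; case=> [_|k /Hrs //]; rewrite rs0 rs1.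
Qed.

Lemma weak_euclid0 (a : A) : weak_euclid a 0.
Proof.
have := weak_euclid_step 0 (weak_euclid_base 0 a).
by rewrite !mul0r add0r.
Qed.

Lemma weak_euclidP (a b : A) : weak_euclid a b <-> Sprod_row_multiple a b.
Proof.
split.
  move=> [n [q [r [<- [<- []]]]]].
  elim: n q r => [|n IH] q r rn Hr; rewrite Hr //; apply: Sprod_row_multiple_step.
    by rewrite rn; exact: Sprod_row_multiple0.
  by apply: (IH (q \o succn) (r \o succn)) => // k; exact: Hr k.+1.
move=> [c [l]]; elim/last_ind: l a b => [|l q IH] a b [-> ->].
  by rewrite Sprod_nil mx2_1 !mx2E mulr0 mulr1; exact: weak_euclid0.
case: (row0_Sprod_rcons l q) => -> ->.
have -> : c * (Sprod l ord0 ord0 * q + Sprod l ord0 ord_max) =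
          q * (c * Sprod l ord0 ord0) + c * Sprod l ord0 ord_max by ring.
by apply: weak_euclid_step; apply: IH.
Qed.

(** * Continued fractions *)

Lemma p1_act_infty M :
  p1_act (infty A) M = frac_pt (M ord0 ord0) (M ord0 ord_max).
Proof. by rewrite /p1_act /frac_pt /= !mulr1 !mulr0 !addr0. Qed.

Lemma frac_pt_scale (k a b : A) : k != 0 -> frac_pt (k * a) (k * b) = frac_pt a b.
Proof.
move=> k0; rewrite /frac_pt /p1_of /frac_of !rmorphM /= mulf_eq0 !tofrac_eq0 (negbTE k0) /=.
by case: ifP => // _; rewrite invfM mulrACA divff ?mul1r // tofrac_eq0.
Qed.

Lemma frac_pt_cross (a b x y : A) : frac_pt a b = frac_pt x y -> a * y = b * x.
Proof.
rewrite /frac_pt /p1_of /frac_of !tofrac_eq0.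
case: (eqVneq b 0) => [->|b0]; case: (eqVneq y 0) => [->|y0] //=.
  by rewrite mulr0 mul0r.
case=> /eqP; rewrite eqr_div ?tofrac_eq0 // -!rmorphM tofrac_eq => /eqP ->.
exact: mulrC.
Qed.

Lemma frac_pt_Smx c (x y : A) : (x, y) <> (0, 0) ->
  p1_addA c (p1_inv (frac_pt x y)) = frac_pt (x * c + y) x.
Proof.
move=> xy0; rewrite /frac_pt /p1_of /frac_of !tofrac_eq0.
case: (eqVneq y 0) => [y0|y0] /=; rewrite /frac_of.
  have x0 : x != 0 by apply: contra_not_neq xy0 => ->; rewrite y0.
  rewrite (negbTE x0) y0 !addr0 rmorphM /=; congr Some.
  by rewrite [tofrac x * _]mulrC mulfK // tofrac_eq0.
case: (eqVneq x 0) => [->|x0]; first by rewrite rmorph0 mul0r /p1_of eqxx.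
have fx : tofrac x != 0 :> {fraction A} by rewrite tofrac_eq0.
have fy : tofrac y != 0 :> {fraction A} by rewrite tofrac_eq0.
rewrite /p1_of (negbTE (mulf_neq0 fx (invr_neq0 fy))) /= /frac_of; congr Some.
by rewrite rmorphD rmorphM /= div1r invf_div mulrDl [tofrac x * _]mulrC mulfK.
Qed.

Lemma p1_act_Sprod_rcons l c : p1_act (infty A) (Sprod (rcons l c)) =
  p1_addA c (p1_inv (p1_act (infty A) (Sprod l))).
Proof.
rewrite !p1_act_infty; case: (row0_Sprod_rcons l c) => -> ->.
by rewrite frac_pt_Smx //; exact: unimodular_neq0 (unimodular_row0 (Sprod_unit l)).
Qed.

Lemma cfrac_Sprod a0 s : cfrac a0 s = p1_act (infty A) (Sprod (rev (a0 :: s))).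
Proof.
elim: s a0 => [|a1 s IH] a0; last by rewrite [in RHS]rev_cons p1_act_Sprod_rcons -IH.
rewrite p1_act_infty Sprod_cons Sprod_nil mulmx1 !mx2E /frac_pt /p1_of /frac_of.
by rewrite rmorph1 oner_eq0 divr1.
Qed.

Lemma prod_Smx_Sprod n (a : nat -> A) :
  \prod_(i < n.+1) Smx (a (n - i)%N) = Sprod (mkseq (fun i => a (n - i)%N) n.+1).
Proof. by rewrite /Sprod /mkseq big_map -[iota 0 n.+1]/(index_iota 0 n.+1) big_mkord. Qed.

Lemma frac_pt_Sprod_row (a b : A) : (a, b) <> (0, 0) ->
  (exists l, frac_pt a b = p1_act (infty A) (Sprod l)) <-> Sprod_row_multiple a b.
Proof.
move=> ab0; split=> [[l]|[c [l [Ea Eb]]]].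
  rewrite p1_act_infty => /frac_pt_cross ab_cross.
  have [c [Ea Eb]] := unimodular_multiple (unimodular_row0 (Sprod_unit l)) ab_cross.
  by exists c, l.
exists l; rewrite p1_act_infty Ea Eb frac_pt_scale //.
by apply: contra_not_neq ab0 => c0; rewrite Ea Eb c0 !mul0r.
Qed.

Definition Sorbit_bezout : Prop :=
  forall x : P1 A, bezout_point x -> exists l, x = p1_act (infty A) (Sprod l).

Lemma cond2_Sorbit : cond2 A <-> Sorbit_bezout.
Proof.
split=> H x /H; first by move=> [n [a ->]]; rewrite prod_Smx_Sprod; eexists.
(* words in cond2 are nonempty; S(0) S(0) = 1 pads any word *)
move=> [l ->]; set s := l ++ [:: 0; 0].
have size_s : size s = (size l).+2 by rewrite size_cat addn2.
pose a k := nth 0 s ((size l).+1 - k).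
exists (size l).+1, a; rewrite prod_Smx_Sprod -Sprod_pad.
congr (p1_act _ (Sprod _)); rewrite -/s.
apply: (@eq_from_nth _ 0) => [|i]; first by rewrite size_mkseq.
by rewrite size_s => lt_i; rewrite nth_mkseq // /a subKn.
Qed.

Lemma cond5_Sorbit : cond5 A <-> Sorbit_bezout.
Proof.
split=> H x /H; first by move=> [a0 [s ->]]; exists (rev (a0 :: s)); exact: cfrac_Sprod.
move=> [l ->]; exists 0, (0 :: rev l); rewrite cfrac_Sprod -Sprod_pad.
by rewrite !rev_cons revK -!cats1 -catA.
Qed.

Lemma cond3_Sorbit : cond3 A <-> Sorbit_bezout.
Proof.
split=> H.
  move=> _ [a [b [ab_bez ->]]]; apply/(frac_pt_Sprod_row ab_bez.1)/weak_euclidP.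
  exact: H.
move=> a b ab_bez; apply/weak_euclidP/(frac_pt_Sprod_row ab_bez.1).
by have [l ->] := H (frac_pt a b) (ex_intro _ a (ex_intro _ b (conj ab_bez erefl))); exists l.
Qed.

(** * The normal form diag(u, v) S(a_1) ... S(a_n) and GE_2 *)

Definition diag_Sprod (M : 'M[A]_2) : Prop := exists u v l,
  [/\ u \is a GRing.unit, v \is a GRing.unit & M = mx2 u 0 0 v *m Sprod l].

Lemma cond3_diag_Sprod : cond3 A -> forall M, M \in unitmx -> diag_Sprod M.
Proof.
move=> euclid M Mu.
have /weak_euclidP[c [l [M00 M01]]] : weak_euclid (M ord0 ord0) (M ord0 ord_max).
  by apply: euclid; apply: unimodular_bezout_pair; exact: unimodular_row0.
have [e [f [cu fu ->]]] := unitmx_row0_factor Mu (Sprod_unit l) M00 M01.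
exists c, f, (0 :: e / f :: l); split=> //.
by rewrite lower_mx2_diag_Smx // -!mulmxA -!Sprod_cons.
Qed.

Definition GE2_prod (M : 'M[A]_2) : Prop :=
  exists s, (forall g, g \in s -> GE2_gen g) /\ M = \prod_(g <- s) g.

Lemma GE2_prod_gen (g : 'M[A]_2) : GE2_gen g -> GE2_prod g.
Proof. by move=> gen; exists [:: g]; rewrite big_seq1; split=> // h /[1!inE] /eqP ->. Qed.

Lemma GE2_prod_mul M N : GE2_prod M -> GE2_prod N -> GE2_prod (M *m N).
Proof.
move=> [s1 [gens1 ->]] [s2 [gens2 ->]]; exists (s1 ++ s2); split.
  by move=> g; rewrite mem_cat => /orP[/gens1|/gens2].
by rewrite big_cat mulmxE.
Qed.

Lemma GE2_prod_Smx c : GE2_prod (Smx c).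
Proof.
have -> : Smx c = mx2 1 (c + 1) 0 1 *m mx2 1 0 (-1) 1 *m mx2 1 1 0 1 *m mx2 (-1) 0 0 1.
  by rewrite !mx2_mul /Defs.Smx; congr Defs.mx2; ring.
rewrite -!mulmxA; apply: GE2_prod_mul; last apply: GE2_prod_mul; last apply: GE2_prod_mul.
all: apply: GE2_prod_gen.
- by left; exists (c + 1); left.
- by left; exists (-1); right.
- by left; exists 1; left.
- by right; exists (-1), 1; rewrite unitrN unitr1.
Qed.

Lemma GE2_prod_diag_Sprod M : diag_Sprod M -> GE2_prod M.
Proof.
move=> [u [v [l [uu vu ->]]]]; apply: GE2_prod_mul.
  by apply: GE2_prod_gen; right; exists u, v.
elim: l => [|c l IH]; first by exists [::]; rewrite Sprod_nil big_nil.
by rewrite Sprod_cons; apply: GE2_prod_mul => //; exact: GE2_prod_Smx.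
Qed.

Lemma diag_Sprod1 : diag_Sprod 1%:M.
Proof. by exists 1, 1, [::]; rewrite Sprod_nil mulmx1 mx2_1 unitr1. Qed.

Lemma diag_Sprod_Smx c M : diag_Sprod M -> diag_Sprod (Smx c *m M).
Proof.
move=> [u [v [l [uu vu ->]]]]; exists v, u, (c * u / v :: l); split=> //.
by rewrite mulmxA Smx_mul_diag // -mulmxA Sprod_cons.
Qed.

Lemma diag_Sprod_diag u v M : u \is a GRing.unit -> v \is a GRing.unit ->
  diag_Sprod M -> diag_Sprod (mx2 u 0 0 v *m M).
Proof.
move=> uu vu [u' [v' [l [u'u v'u ->]]]]; exists (u * u'), (v * v'), l.
split; rewrite ?unitrM ?uu ?vu ?u'u ?v'u //.
by rewrite mulmxA mx2_mul; congr (mx2 _ _ _ _ *m _); ring.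
Qed.

Lemma diag_Sprod_gen (g M : 'M[A]_2) : GE2_gen g -> diag_Sprod M -> diag_Sprod (g *m M).
Proof.
move=> [[x [->|->]]|[u [v [uu [vu ->]]]]] MD; last exact: diag_Sprod_diag.
  by rewrite upper_mx2_Smx -mulmxA; do 2!apply: diag_Sprod_Smx.
by rewrite lower_mx2_Smx -mulmxA; do 2!apply: diag_Sprod_Smx.
Qed.

Lemma GE2_gen_invmx (g : 'M[A]_2) : GE2_gen g -> GE2_gen (invmx g).
Proof.
move=> [[x [->|->]]|[u [v [uu [vu ->]]]]].
- left; exists (- x); left; apply: invmx_right.
  by rewrite mx2_mul mx2_1; congr Defs.mx2; ring.
- left; exists (- x); right; apply: invmx_right.
  by rewrite mx2_mul mx2_1; congr Defs.mx2; ring.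
right; exists u^-1, v^-1; rewrite !unitrV; do 2!split=> //; apply: invmx_right.
by rewrite mx2_mul mx2_1 !mulrV // !(mulr0, mul0r, addr0, add0r).
Qed.

Lemma GE2_diag_Sprod : GE2_ring A <-> forall M, M \in unitmx -> diag_Sprod M.
Proof.
split=> H M Mu; last first.
  have [s [gens ->]] := GE2_prod_diag_Sprod (H M Mu).
  by exists s; split=> // g /gens; left.
have [s [gens ->]] := H M Mu; elim: s gens => [|g s IH] gens.
  by rewrite big_nil; exact: diag_Sprod1.
rewrite big_cons -mulmxE; apply: diag_Sprod_gen.
  by case: (gens g (mem_head g s)) => // /GE2_gen_invmx; rewrite invmxK.
by apply: IH => h hs; apply: gens; rewrite inE hs orbT.
Qed.

(** * Paths in Gamma(A) *)

Lemma gamma_edge_Smx c Q : Q \in unitmx -> gamma_edge (row0 (Smx c *m Q)) (row0 Q).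
Proof.
rewrite /gamma_edge row0_Smx_mul [Q in Q \in _]mx2_eta !unitmx2 /= => Qu.
rewrite (_ : _ - _ = - (Q ord0 ord0 * Q ord_max ord_max - Q ord0 ord_max * Q ord_max ord0)).
  by rewrite unitrN.
by ring.
Qed.

Lemma walk_Sprod l Q : Q \in unitmx -> exists s,
  [/\ forall w, w \in s -> unimodular w, last (row0 (Sprod l *m Q)) s = row0 Q
    & gamma_walk (row0 (Sprod l *m Q)) s].
Proof.
move=> Qu; elim: l => [|c l [s [s_unimod s_last s_walk]]].
  by exists [::]; rewrite Sprod_nil mul1mx.
have lQu : Sprod l *m Q \in unitmx by rewrite unitmx_mul Sprod_unit.
exists (row0 (Sprod l *m Q) :: s); split=> //.
  by move=> w /[1!inE] /predU1P[->|/s_unimod //]; exact: unimodular_row0.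
by rewrite Sprod_cons -mulmxA; split=> //; exact: gamma_edge_Smx.
Qed.

Lemma diag_Sprod_Gamma :
  (forall M, M \in unitmx -> diag_Sprod M) -> Gamma_path_connected A.
Proof.
move=> nf u v /unimodular_completion[Mu Mu_unit <-] /unimodular_completion[Mv Mv_unit <-].
have [p [q [l [pu qu E]]]] : diag_Sprod (Mu *m invmx Mv).
  by apply: nf; rewrite unitmx_mul Mu_unit unitmx_inv.
have EMu : Mu = mx2 p 0 0 q *m (Sprod l *m Mv) by rewrite mulmxA -E mulmxKV.
have [s [s_unimod s_last s_walk]] := walk_Sprod l Mv_unit.
exists (row0 (Sprod l *m Mv)), s; split.
  by apply: unimodular_row0; rewrite unitmx_mul Sprod_unit.
split=> //; split; last split=> //.
  by exists p^-1; rewrite unitrV EMu row0_diag_mul /= !mulKr.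
by rewrite s_last; exists 1; rewrite unitr1 !mul1r; case: (row0 Mv).
Qed.

Lemma Sprod_row_multiple_edge (u v : A * A) : Sprod_row_multiple u.1 u.2 ->
  gamma_edge u v -> Sprod_row_multiple v.1 v.2.
Proof.
case: u v => [a b] [a' b'] /= [c [l [Ea Eb]]] uv_edge.
have [e [f [_ fu /matrixP E]]] :=
  unitmx_row0_factor (c := c) uv_edge (Sprod_unit l) (etrans (mx2_00 _ _ _ _) Ea)
    (etrans (mx2_01 _ _ _ _) Eb).
have fef : f * (e / f) = e by rewrite mulrC divrK.
move: (E ord_max ord0) (E ord_max ord_max); rewrite !mulmx2E !mx2E /= => -> ->.
exists f, (e / f :: l); rewrite Sprod_cons; case: (row0_Smx_mul (e / f) (Sprod l)) => -> ->.
by split; rewrite mulrDr mulrA fef.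
Qed.

Lemma Sprod_row_multiple_walk w0 s : Sprod_row_multiple w0.1 w0.2 ->
  gamma_walk w0 s -> Sprod_row_multiple (last w0 s).1 (last w0 s).2.
Proof.
elim: s w0 => [//|w1 s IH] w0 w0S /= [w0w1 w1s].
exact: IH (Sprod_row_multiple_edge w0S w0w1) w1s.
Qed.

Lemma Gamma_cond3 : Gamma_path_connected A -> cond3 A.
Proof.
move=> conn a b /bezout_pair_unimodular[d [a' [b' [-> -> ab'_unimod]]]].
apply/weak_euclidP/Sprod_row_multipleZ.
have unimod10 : unimodular (1 : A, 0 : A) by exists 1, 0; rewrite /= mulr1 mulr0 addr0.
have [w0 [s [_ [_ [[c [_ ->]] [[c' [c'u Elast]] walk]]]]]] := conn _ _ unimod10 ab'_unimod.
have start : Sprod_row_multiple (c * 1) (c * 0).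
  by rewrite mulr1 mulr0; exact: Sprod_row_multiple0.
have := @Sprod_row_multiple_walk (c * 1, c * 0) s start walk.
by rewrite Elast /= => /(Sprod_row_multipleZ c'^-1); rewrite !mulKr.
Qed.
End GE2.

Theorem corollary3p11 (A : idomainType) :
  [<-> Gamma_path_connected A; cond2 A; cond3 A; GE2_ring A; cond5 A].
Proof.
tfae.
- by move/Gamma_cond3/cond3_Sorbit/cond2_Sorbit.
- by move/cond2_Sorbit/cond3_Sorbit.
- by move/cond3_diag_Sprod/GE2_diag_Sprod.
- by move/GE2_diag_Sprod/diag_Sprod_Gamma/Gamma_cond3/cond3_Sorbit/cond5_Sorbit.
- by move/cond5_Sorbit/cond3_Sorbit/cond3_diag_Sprod/diag_Sprod_Gamma.
Qed.
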